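(* Let $\pi$ be a function assigning to each $3$-element subset $S$ of $\{a,b,c,d,e\}$ a string $\pi(S)$ of length $3$ that is an ordering of the three elements of $S$, and suppose that $d(\pi(S),\pi(S'))\le 2$ for all $3$-element subsets $S,S'$ with $|S\oplus S'|=2$. Then for every $2$-element subset $\{x,y\}\subseteq\{a,b,c,d,e\}$ there exists a position $i\in\{1,2,3\}$ such that either $\pi(S)[i]=x$ for every $3$-element set $S$ with $\{x,y\}\subset S\subseteq\{a,b,c,d,e\}$, or $\pi(S)[i]=y$ for every such $S$.
   Context: $d(X,Y)$ denotes the Hamming distance between strings $X,Y$ of equal length, and $\pi(S)[i]$ denotes the $i$-th letter of the string $\pi(S)$. $S\oplus S'$ is the symmetric difference of sets. *)

From mathcomp Require Import all_boot.
Set Implicit Arguments. Unset Strict Implicit. Unset Printing Implicit Defensive.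

(* The alphabet {a,b,c,d,e} is modelled by 'I_5; strings of length 3 by
   3.-tuples; positions 1,2,3 by 'I_3 (0-based). *)

Definition hamming (T : eqType) (n : nat) (X Y : n.-tuple T) : nat :=
  #|[set i : 'I_n | tnth X i != tnth Y i]|.

Definition symdiff (T : finType) (S S' : {set T}) : {set T} :=
  (S :\: S') :|: (S' :\: S).

Definition is_ordering (T : finType) (n : nat) (s : n.-tuple T) (S : {set T}) : bool :=
  uniq s && [forall x, (x \in s) == (x \in S)].

From mathcomp Require Import all_boot zify.
Set Implicit Arguments. Unset Strict Implicit. Unset Printing Implicit Defensive.

(* Fix x <> y and let F be the family of 3-subsets of {a,...,e} that properly
   contain {x,y}.  Two distinct members of F meet exactly in {x,y}, so their
   symmetric difference has two elements and, by hypothesis, their orderings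
   differ in at most two of the three positions.  The position where they
   agree carries a common letter, i.e. x or y; hence any two members of F
   place x at the same position or place y at the same position.  A purely
   combinatorial lemma then shows that the position of x is the same for all
   of F, or the position of y is. *)

Lemma ordering_mem (T : finType) n (s : n.-tuple T) (S : {set T}) :
  is_ordering s S -> s =i S.
Proof. by case/andP=> _ /forallP mem v; apply/eqP/mem. Qed.

Lemma ordering_uniq (T : finType) n (s : n.-tuple T) (S : {set T}) :
  is_ordering s S -> uniq s.
Proof. by case/andP. Qed.

Lemma tnth_index_eq (T : eqType) n (s : n.-tuple T) (i : 'I_n) v :
  uniq s -> tnth s i = v -> index v s = i.
Proof. by move=> us <-; rewrite (tnth_nth (tnth s i)) index_uniq ?size_tuple. Qed.

Lemma index_tnth_eq (T : eqType) n (s : n.-tuple T) (i : 'I_n) v :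
  v \in s -> index v s = i -> tnth s i = v.
Proof. by move=> vs e; rewrite (tnth_nth v) -e nth_index. Qed.

Lemma hamming_agree (T : eqType) n (X Y : n.-tuple T) :
  hamming X Y < n -> exists i, tnth X i = tnth Y i.
Proof.
case: (pickP (fun i => tnth X i == tnth Y i)) => [i /eqP | differ]; first by exists i.
rewrite /hamming.
have -> : [set i | tnth X i != tnth Y i] = setT by apply/setP=> i; rewrite !inE differ.
by rewrite cardsT card_ord ltnn.
Qed.

Lemma card_symdiff (T : finType) (S S' : {set T}) :
  #|symdiff S S'| + 2 * #|S :&: S'| = #|S| + #|S'|.
Proof.
have disj : (S :\: S') :&: (S' :\: S) = set0.
  by apply/setP=> v; rewrite !inE; case: (v \in S); case: (v \in S').
rewrite /symdiff cardsU disj cards0 subn0 !cardsD [S' :&: S]setIC.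
have := subset_leq_card (subsetIl S S'); have := subset_leq_card (subsetIr S S').
lia.
Qed.

Lemma meet_of_extensions (T : finType) (P S S' : {set T}) :
  P \subset S -> P \subset S' -> #|S| = #|P|.+1 -> #|S'| = #|P|.+1 ->
  S != S' -> S :&: S' = P.
Proof.
move=> PS PS' cS cS' /negP neq; apply/eqP.
rewrite eq_sym eqEcard subsetI PS PS' leqNgt /=; apply/negP => big; apply: neq.
have eS : S :&: S' = S by apply/eqP; rewrite eqEcard subsetIl cS.
have eS' : S :&: S' = S' by apply/eqP; rewrite eqEcard subsetIr cS'.
by rewrite -{1}eS eS'.
Qed.

Lemma orderings_share_position (T : finType) n (s s' : n.-tuple T)
    (S S' : {set T}) x y :
  is_ordering s S -> is_ordering s' S' -> S :&: S' = [set x; y] ->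
  hamming s s' < n -> index x s = index x s' \/ index y s = index y s'.
Proof.
move=> oS oS' meet /hamming_agree[i same].
have : tnth s i \in S :&: S'.
  by rewrite inE -(ordering_mem oS) -(ordering_mem oS') {2}same !mem_tnth.
have [us us'] := (ordering_uniq oS, ordering_uniq oS').
rewrite meet !inE => /orP[/eqP at_i | /eqP at_i]; [left | right];
  by rewrite (tnth_index_eq us at_i) (tnth_index_eq us' (etrans (esym same) at_i)).
Qed.

Lemma two_coordinates (I : finType) (A B : eqType) (P : pred I)
    (f : I -> A) (g : I -> B) :
  {in P &, forall s t, f s = f t \/ g s = g t} ->
  {in P &, forall s t, f s = f t} \/ {in P &, forall s t, g s = g t}.
Proof.
move=> agree.
case: (boolP [exists s, exists t, [&& s \in P, t \in P & f s != f t]]);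
  last first.
  move/existsPn=> f_const; left => s t Ps Pt.
  by move/existsPn: (f_const s) => /(_ t); rewrite Ps Pt negbK => /eqP.
case/existsP=> s1 /existsP[s2 /and3P[P1 P2 f12]]; right.
have g12 : g s1 = g s2 by case: (agree s1 s2 P1 P2) => // e; rewrite e eqxx in f12.
suff g_const : {in P, forall t, g t = g s1} by move=> s t Ps Pt; rewrite !g_const.
move=> t Pt; case: (agree t s1 Pt P1) => [ft1 | //].
case: (agree t s2 Pt P2) => [ft2 | ->//].
by move: f12; rewrite -ft1 ft2 eqxx.
Qed.

Lemma constant_position (I : finType) (P : pred I) (T : eqType) n
    (s : I -> n.+1.-tuple T) v :
  {in P, forall t, v \in s t} ->
  {in P &, forall t u, index v (s t) = index v (s u)} ->
  exists i : 'I_n.+1, {in P, forall t, tnth (s t) i = v}.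
Proof.
move=> occurs same; case: (pickP P) => [t0 Pt0 | noP]; last first.
  by exists ord0 => t; rewrite unfold_in noP.
have lt_n : index v (s t0) < n.+1.
  by have := index_mem v (s t0); rewrite size_tuple occurs // => ->.
exists (Ordinal lt_n) => t Pt.
by apply: index_tnth_eq (occurs t Pt) _; rewrite (same t t0).
Qed.

Theorem lemma3p3 (pi : {set 'I_5} -> 3.-tuple 'I_5) :
  (forall S : {set 'I_5}, #|S| = 3 -> is_ordering (pi S) S) ->
  (forall S S' : {set 'I_5}, #|S| = 3 -> #|S'| = 3 ->
     #|symdiff S S'| = 2 -> hamming (pi S) (pi S') <= 2) ->
  forall x y : 'I_5, x != y ->
  exists i : 'I_3,
    (forall S : {set 'I_5}, #|S| = 3 -> [set x; y] \proper S -> tnth (pi S) i = x) \/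
    (forall S : {set 'I_5}, #|S| = 3 -> [set x; y] \proper S -> tnth (pi S) i = y).
Proof.
move=> ordered close x y xy.
pose F := [pred S : {set 'I_5} | (#|S| == 3) && ([set x; y] \proper S)].
have card_xy : #|[set x; y]| = 2 by rewrite cards2 xy.
have agree : {in F &, forall S S',
    index x (pi S) = index x (pi S') \/ index y (pi S) = index y (pi S')}.
  move=> S S' /andP[/eqP cS pS] /andP[/eqP cS' pS'].
  have [-> | neq] := eqVneq S S'; first by left.
  have meet : S :&: S' = [set x; y].
    by apply: meet_of_extensions; rewrite ?proper_sub ?card_xy.
  have sd : #|symdiff S S'| = 2.
    by have := card_symdiff S S'; rewrite meet card_xy cS cS'; lia.
  exact: orderings_share_position (ordered _ cS) (ordered _ cS') meet (close _ _ cS cS' sd).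
have in_pi v : v \in [set x; y] -> {in F, forall S, v \in pi S}.
  move=> vxy S /andP[/eqP cS pS].
  by rewrite (ordering_mem (ordered _ cS)) (subsetP (proper_sub pS)).
have inF (S : {set 'I_5}) : #|S| = 3 -> [set x; y] \proper S -> S \in F.
  by move=> cS pS; rewrite inE /= cS pS.
have [same_x | same_y] := two_coordinates agree.
- have [i at_i] := constant_position (in_pi x (set21 x y)) same_x.
  by exists i; left => S cS pS; apply/at_i/inF.
- have [i at_i] := constant_position (in_pi y (set22 x y)) same_y.
  by exists i; right => S cS pS; apply/at_i/inF.
Qed.
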